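(* Let \(k\ge0\), \(\lambda=(\lambda_1\ge\dots\ge\lambda_k\ge0)\), and let \(J=(j_0<\dots<j_{r-1})\) be a strictly increasing sequence of non-negative integers of length \(r\ge k\) with \(J\succeq_k\lambda\). Then \(N_k(J)\ge|\lambda|\), with equality if and only if \(r=k\) and \(J=J^{(k)}_\lambda\).
   Context: \(|\lambda|=\lambda_1+\dots+\lambda_k\). \(J\succeq_k\lambda\) means \(j_{r-i}\ge\lambda_i+k-i\) for \(i=1,\dots,k\). \(J^{(k)}_\lambda=(\lambda_k,\lambda_{k-1}+1,\dots,\lambda_1+k-1)\). \(N_k(J)=r(r-k)+\sum_{q=0}^{r-1}(j_q-q)\). *)

From mathcomp Require Import all_boot all_order all_algebra.
Set Implicit Arguments. Unset Strict Implicit. Unset Printing Implicit Defensive.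
Import GRing.Theory Num.Theory.

(* Partitions lambda = (lambda_1 >= ... >= lambda_k >= 0) are sequences of nat,
   lambda_i = nth 0 lambda (i-1).  J = (j_0 < ... < j_{r-1}), j_q = nth 0 J q. *)

Definition is_partition (k : nat) (lambda : seq nat) : bool :=
  (size lambda == k) && sorted geq lambda.

Definition strictly_increasing (J : seq nat) : bool := sorted ltn J.

Definition weight (lambda : seq nat) : nat := sumn lambda.

Definition dominates (k : nat) (J lambda : seq nat) : Prop :=
  forall i, 1 <= i <= k ->
    nth 0 lambda (i - 1) + k - i <= nth 0 J (size J - i).

Definition Jk (k : nat) (lambda : seq nat) : seq nat :=
  mkseq (fun q => nth 0 lambda (k - 1 - q) + q) k.

Definition Nk (k : nat) (J : seq nat) : int :=
  let r := size J in
  (r%:Z * (r%:Z - k%:Z) + \sum_(q < r) ((nth 0 J q)%:Z - q%:Z))%R.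

From mathcomp Require Import all_boot all_order all_algebra.
From mathcomp Require Import zify ring.
Import GRing.Theory Num.Theory.

(* Write r = m + k.  Splitting the sum in N_k(J) after its first m terms gives
   N_k(J) = m^2 + sum_{q<m} (j_q - q) + sum_{t<k} (j_{m+t} - lambda_{k-t} - t) + |lambda|.
   The first sum is non-negative because a strictly increasing sequence of
   naturals satisfies j_q >= q, and each term of the second sum is non-negative:
   it is the dominance condition for i = k - t.  Equality forces m = 0 and every
   dominance inequality to be tight, i.e. J = J^(k)_lambda. *)

Section DominanceGap.
Set Implicit Arguments. Unset Strict Implicit.
Local Open Scope ring_scope.

Lemma sorted_ltn_index_leq_nth (J : seq nat) (q : nat) :
  sorted ltn J -> (q < size J)%N -> (q <= nth 0%N J q)%N.
Proof.
move=> sJ; elim: q => [|q IHq] ltqJ //.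
have lt_jq : (nth 0%N J q < nth 0%N J q.+1)%N.
  by apply: (sorted_ltn_nth ltn_trans) => //; rewrite inE // ltnW.
by apply: leq_ltn_trans lt_jq; apply: IHq; apply: ltnW.
Qed.

Lemma sum_nth_sub_index_ge0 (J : seq nat) (n : nat) :
  sorted ltn J -> (n <= size J)%N ->
  0 <= \sum_(q < n) ((nth 0%N J q)%:Z - q%:Z).
Proof.
move=> sJ le_nJ; apply: sumr_ge0 => q _; rewrite subr_ge0 lez_nat.
by apply: sorted_ltn_index_leq_nth => //; exact: leq_trans (ltn_ord q) le_nJ.
Qed.

Lemma weight_nth_rev (k : nat) (lambda : seq nat) : size lambda = k ->
  (weight lambda)%:Z = \sum_(t < k) (nth 0%N lambda (k - 1 - t))%:Z.
Proof.
move=> szl; rewrite /weight sumnE (big_nth 0) szl big_rev_mkord subn0.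
rewrite (big_morph Posz PoszD (erefl _)).
by apply: eq_bigr => t _; congr (Posz (nth _ _ _)); lia.
Qed.

Definition dominance_gap (k : nat) (J lambda : seq nat) (t : nat) : int :=
  (nth 0%N J (size J - k + t))%:Z - (nth 0%N lambda (k - 1 - t))%:Z - t%:Z.

Lemma dominance_gap_ge0 (k : nat) (J lambda : seq nat) (t : nat) :
  (k <= size J)%N -> dominates k J lambda -> (t < k)%N ->
  0 <= dominance_gap k J lambda t.
Proof.
move=> le_kJ dom lt_tk.
have /dom : (1 <= k - t <= k)%N by lia.
have -> : (size J - (k - t))%N = (size J - k + t)%N by lia.
have -> : (k - t - 1)%N = (k - 1 - t)%N by lia.
by rewrite /dominance_gap; lia.
Qed.

Lemma dominance_gap_eq0P (k : nat) (J lambda : seq nat) : size J = k ->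
  (forall t, (t < k)%N -> dominance_gap k J lambda t = 0) <-> J = Jk k lambda.
Proof.
rewrite /dominance_gap => szJ; rewrite szJ subnn; split.
- move=> gap0; apply: (@eq_from_nth _ 0%N); first by rewrite size_mkseq.
  move=> q; rewrite szJ => ltqk; rewrite nth_mkseq //.
  by have := gap0 q ltqk; rewrite add0n; lia.
- by move=> -> t lttk; rewrite add0n nth_mkseq // PoszD; ring.
Qed.

Lemma Nk_decomposition (k : nat) (lambda J : seq nat) :
  size lambda = k -> (k <= size J)%N ->
  Nk k J = (size J - k)%:Z ^+ 2
         + \sum_(q < size J - k) ((nth 0%N J q)%:Z - q%:Z)
         + \sum_(t < k) dominance_gap k J lambda t
         + (weight lambda)%:Z.
Proof.
move=> szl le_kJ; set m := (size J - k)%N.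
have szJ : size J = (m + k)%N by rewrite subnK.
rewrite /Nk /dominance_gap -/m szJ big_split_ord /= (weight_nth_rev szl).
have tail_term (t : 'I_k) : (nth 0%N J (m + t))%:Z - (m + t)%N%:Z
    = (nth 0%N J (m + t))%:Z - (nth 0%N lambda (k - 1 - t))%:Z - t%:Z
      + (nth 0%N lambda (k - 1 - t))%:Z - m%:Z.
  by rewrite PoszD; ring.
rewrite (eq_bigr _ (fun t _ => tail_term t)) !big_split /= sumrN sumr_const.
by rewrite card_ord -mulr_natr natz !PoszD; ring.
Qed.
End DominanceGap.

Theorem lemma4p15 (k : nat) (lambda J : seq nat) :
  is_partition k lambda ->
  strictly_increasing J ->
  k <= size J ->
  dominates k J lambda ->
  (Posz (weight lambda) <= Nk k J)%R /\
  (Nk k J = Posz (weight lambda) <-> (size J = k /\ J = Jk k lambda)).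
Proof.
move=> /andP[/eqP szl _] sJ le_kJ dom; rewrite (Nk_decomposition szl le_kJ).
set m := (size J - k)%N; set S := (\sum_(q < m) _)%R; set D := (\sum_(t < k) _)%R.
have S_ge0 : (0 <= S)%R := sum_nth_sub_index_ge0 sJ (leq_subr k _).
have gap_ge0 (t : 'I_k) : (0 <= dominance_gap k J lambda t)%R :=
  dominance_gap_ge0 le_kJ dom (ltn_ord t).
have D_ge0 : (0 <= D)%R by apply: sumr_ge0 => t _.
have m2_ge0 : (0 <= m%:Z ^+ 2)%R := sqr_ge0 _.
split; first lia.
split=> [Nk_eq | [szJ J_eq]].
- have m0 : m = 0%N.
    have /eqP : (m%:Z ^+ 2 = 0)%R by lia.
    by rewrite sqrf_eq0 => /eqP[].
  have szJ : size J = k by rewrite -(subnK le_kJ) -/m m0.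
  split=> //; apply/(dominance_gap_eq0P _ szJ) => t lttk.
  have D0 : D = 0%R by lia.
  exact: (psumr_eq0P (fun t _ => gap_ge0 t) D0 (i := Ordinal lttk)).
- have m0 : m = 0%N by rewrite /m szJ subnn.
  have D0 : D = 0%R.
    by apply: big1 => t _; exact: (dominance_gap_eq0P _ szJ).2 J_eq _ (ltn_ord t).
  by rewrite /S m0 big_ord0 D0; lia.
Qed.
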